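(* Let $M=\max_{x\in V}d_x^{-1/2}$. For all $\lambda,\mu>0$ and $x,y\in V$, $$|\mathrm{KD}_\lambda(x,y)-\mathrm{KD}_\mu(x,y)|\le 2M\,\mathrm{vol}(V)^{1/2}|\lambda-\mu|.$$
   Context: Let $H=(V,E,w)$ be a weighted hypergraph: $V$ is a finite set, $E$ a set of nonempty subsets of $V$, $w\colon E\to\mathbb{R}_{>0}$. Write $x\sim y$ if some $e\in E$ contains both; $H$ is assumed connected. The degree is $d_x=\sum_{e\ni x}w_e>0$, $D=\mathrm{diag}(d_x)$, $\mathrm{vol}(V)=\sum_x d_x$. The distance $d(x,y)$ is the minimal $n$ with a chain $x=z_0\sim\cdots\sim z_n=y$. $\delta_x$ is the indicator of $x$. $\mathbb{R}^V$ carries the inner product $\langle f,g\rangle=\sum_x f(x)g(x)/d_x$ with norm $\|\cdot\|$. For $e\in E$ let $B_e=\mathrm{Conv}\{\delta_x-\delta_y : x,y\in e\}$. The multivalued hypergraph Laplacian is $L(f)=\{\sum_{e}w_e\mathtt{b}_e(\mathtt{b}_e^\top f) : \mathtt{b}_e\in\operatorname{argmax}_{\mathtt b\in B_e}\mathtt b^\top f\}$ and the normalized Laplacian is $\mathcal{L}f=L(D^{-1}f)$, a maximal monotone operator on $(\mathbb{R}^V,\langle\cdot,\cdot\rangle)$. For $\lambda>0$ the resolvent $J_\lambda=(I+\lambda\mathcal L)^{-1}$ is a single-valued map $\mathbb{R}^V\to\mathbb{R}^V$ (equivalently $J_\lambda f=\operatorname{argmin}_g\{\frac{1}{2\lambda}\|f-g\|^2+Q(D^{-1}g)\}$,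 $Q(g)=\frac12\sum_e w_e\max_{x,y\in e}(g(x)-g(y))^2$). A function $f$ is weighted $1$-Lipschitz if $|f(x)/d_x-f(y)/d_y|\le d(x,y)$ for all $x,y$; $\mathrm{Lip}^1_w(V)$ denotes the set of such functions. $\mathrm{KD}_\lambda(x,y)=\sup\{\langle J_\lambda f,\delta_x-\delta_y\rangle : f\in\mathrm{Lip}^1_w(V)\}$. *)

From HB Require Import structures.
From mathcomp Require Import all_boot all_order all_algebra.
From mathcomp Require Import boolp classical_sets reals.
From Stdlib Require Import ClassicalEpsilon.

Set Implicit Arguments.
Unset Strict Implicit.
Unset Printing Implicit Defensive.

Import Order.TTheory GRing.Theory Num.Theory.
Local Open Scope ring_scope.

Section Hypergraph.
Context {R : realType} {V : finType}.
(* A weighted hypergraph H = (V, E, w): E is a set of subsets of V,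
   w gives the weight of each hyperedge (only its values on E matter). *)
Variables (E : {set {set V}}) (w : {set V} -> R).

Definition deg (x : V) : R := \sum_(e in E | x \in e) w e.

Definition vol : R := \sum_x deg x.

Definition inner (f g : V -> R) : R := \sum_x f x * g x / deg x.

Definition dot (b h : V -> R) : R := \sum_x b x * h x.

Definition delta (x : V) : V -> R := fun z => (z == x)%:R.

(* b ∈ B_e = Conv{ delta_x - delta_y : x, y ∈ e } *)
Definition inB (e : {set V}) (b : V -> R) : Prop :=
  exists c : V -> V -> R,
    [/\ (forall x y, 0 <= c x y),
        \sum_x \sum_y c x y = 1,
        (forall x y, c x y != 0 -> (x \in e) && (y \in e)) &
        b = (fun z => \sum_x \sum_y c x y * (delta x z - delta y z))].

Definition argmaxB (e : {set V}) (h b : V -> R) : Prop :=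
  inB e b /\ (forall b', inB e b' -> dot b' h <= dot b h).

Definition Lap (h u : V -> R) : Prop :=
  exists bs : {set V} -> V -> R,
    (forall e, e \in E -> argmaxB e h (bs e)) /\
    u = (fun z => \sum_(e in E) w e * bs e z * dot (bs e) h).

Definition NLap (f u : V -> R) : Prop := Lap (fun z => f z / deg z) u.

Definition is_resolvent (lam : R) (f g : V -> R) : Prop :=
  exists u, NLap g u /\ f = (fun z => g z + lam * u z).

(* J_lam f : the (unique, by maximal monotonicity) g with f ∈ g + lam L g *)
Definition resolvent (lam : R) (f : V -> R) : V -> R :=
  epsilon (inhabits (fun _ : V => 0 : R)) (is_resolvent lam f).

Definition adj : rel V := fun x y => [exists e in E, (x \in e) && (y \in e)].

Definition walk (x y : V) (n : nat) : bool :=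
  [exists s : n.-tuple V, path adj x s && (last x s == y)].

(* d(x,y) = minimal length of such a chain (0 if none; H is assumed connected) *)
Definition dist (x y : V) : nat :=
  match pselect (exists n, walk x y n) with
  | left h => ex_minn h
  | right _ => 0%N
  end.

Definition lip1 (f : V -> R) : Prop :=
  forall x y, `|f x / deg x - f y / deg y| <= (dist x y)%:R.

Definition KD (lam : R) (x y : V) : R :=
  sup [set r : R | exists f, lip1 f /\
         r = inner (resolvent lam f) (fun z => delta x z - delta y z)].

Definition Mconst : R := \big[Num.max/0]_x (Num.sqrt (deg x))^-1.

End Hypergraph.

(* Proof outline.
   1. The hypergraph Laplacian L, hence the normalized Laplacian, is monotone
      (Lap_monotone, NLap_monotone), and the weighted inner product satisfies
      Cauchy-Schwarz; moreover ||delta_x - delta_y|| <= 2M.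
   2. The resolvent J_lam f exists (resolvent_spec): a minimizer of a convex
      dual energy over a box of edge coefficients (compactness) satisfies the
      KKT conditions, which exhibit an element of L(D^{-1} g) with f = g + lam u.
   3. For 1-Lipschitz f, L(D^{-1} f) contains u0 with <u0,u0> <= vol(V); by
      monotonicity the Laplacian part u of J_lam f satisfies ||u|| <= vol(V)^{1/2}.
   4. Monotonicity again gives ||J_lam f - J_mu f|| <= |lam - mu| ||u_lam||;
      pairing with delta_x - delta_y and Cauchy-Schwarz bound the change of each
      element of the set defining KD, and suprema of uniformly close bounded
      families are close. *)
From Pilot Require Import Defs.
From HB Require Import structures.
From mathcomp Require Import all_boot all_order all_algebra.
From mathcomp Require Import boolp classical_sets reals.
From mathcomp Require Import ring lra.
From mathcomp Require Import topology normedtype derive.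
From Stdlib Require Import ClassicalEpsilon.
Set Implicit Arguments.
Unset Strict Implicit.
Unset Printing Implicit Defensive.

Import Order.TTheory GRing.Theory Num.Theory.
Import ArrowAsProduct numFieldNormedType.Exports.
Local Open Scope ring_scope.

Section Pairing.
Context {R : realType} {V : finType}.

Lemma sum_deltaB (x y : V) (h : V -> R) :
  \sum_z ((delta x z : R) - delta y z) * h z = h x - h y.
Proof.
have sum_delta a : \sum_z (delta a z : R) * h z = h a.
  rewrite (bigD1 a) //= /delta eqxx mul1r big1 ?addr0 // => z /negbTE ->.
  by rewrite mul0r.
by under eq_bigr do rewrite mulrBl; rewrite sumrB !sum_delta.
Qed.

Lemma dot_convex (c : V -> V -> R) (h : V -> R) :
  dot (fun z => \sum_x \sum_y c x y * (delta x z - delta y z)) h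
  = \sum_x \sum_y c x y * (h x - h y).
Proof.
rewrite /dot.
transitivity (\sum_z \sum_x \sum_y c x y * ((delta x z - delta y z) * h z)).
  apply: eq_bigr => z _; rewrite mulr_suml; apply: eq_bigr => x _.
  by rewrite mulr_suml; apply: eq_bigr => y _; rewrite mulrA.
rewrite exchange_big; apply: eq_bigr => x _; rewrite exchange_big.
by apply: eq_bigr => y _; rewrite -mulr_sumr sum_deltaB.
Qed.

Lemma inB_dot_le (e : {set V}) (b h : V -> R) (m : R) :
  inB e b -> (forall x y, x \in e -> y \in e -> h x - h y <= m) ->
  dot b h <= m.
Proof.
move=> [c [c0 c1 cs ->]] hm; rewrite dot_convex.
apply: (@le_trans _ _ (\sum_x \sum_y c x y * m)).
  apply: ler_sum => x _; apply: ler_sum => y _.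
  have [->|cn] := eqVneq (c x y) 0; first by rewrite !mul0r.
  by have /andP [xe ye] := cs x y cn; apply: ler_wpM2l => //; apply: hm.
under eq_bigr do rewrite -mulr_suml.
by rewrite -mulr_suml c1 mul1r.
Qed.

Lemma inB_pair (e : {set V}) (a b : V) :
  a \in e -> b \in e -> inB e (fun z => (delta a z : R) - delta b z).
Proof.
move=> ae be; pose c x y : R := ((x == a) && (y == b))%:R.
have sum_c (F : V -> V -> R) : \sum_x \sum_y c x y * F x y = F a b.
  rewrite (bigD1 a) //= [X in _ + X]big1 ?addr0; last first.
    by move=> x /negbTE xa; apply: big1 => y _; rewrite /c xa mul0r.
  rewrite (bigD1 b) //= /c !eqxx mul1r big1 ?addr0 // => y /negbTE ->.
  by rewrite andbF mul0r.
exists c; split.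
- by move=> x y; rewrite ler0n.
- rewrite -(sum_c (fun _ _ => 1)); apply: eq_bigr => x _.
  by apply: eq_bigr => y _; rewrite mulr1.
- move=> x y; rewrite /c; case: (boolP ((x == a) && (y == b))) => [|_].
    by case/andP=> /eqP-> /eqP->; rewrite ae be.
  by rewrite eqxx.
- by apply: funext => z; rewrite (sum_c (fun x y => (delta x z : R) - delta y z)).
Qed.

Lemma argmaxB_ge0 (e : {set V}) (h b : V -> R) :
  (0 < #|e|)%N -> argmaxB e h b -> 0 <= dot b h.
Proof.
move=> /card_gt0P [a ae] [_ hmax].
by have := hmax _ (inB_pair ae ae); rewrite /dot sum_deltaB subrr.
Qed.

End Pairing.

Section Monotonicity.
Context {R : realType} {V : finType}.
Variables (E : {set {set V}}) (w : {set V} -> R).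
Hypothesis hE : forall e, e \in E -> (0 < #|e|)%N.
Hypothesis hw : forall e, e \in E -> 0 < w e.
Local Notation d := (deg E w).
Local Notation inner := (inner E w).

Lemma dot_Lap_form (b : {set V} -> V -> R) (t : {set V} -> R) (h : V -> R) :
  dot (fun z => \sum_(e in E) w e * b e z * t e) h
  = \sum_(e in E) w e * t e * dot (b e) h.
Proof.
rewrite /dot; under eq_bigr do rewrite mulr_suml.
rewrite exchange_big; apply: eq_bigr => e _.
by rewrite mulr_sumr; apply: eq_bigr => z _; ring.
Qed.

(* Per hyperedge, with T_i = b_i^T h_i maximal and A = b_1^T h_2 <= T_2,
   B = b_2^T h_1 <= T_1, the contribution T1^2 - T1 A - T2 B + T2^2 is >= 0. *)
Lemma edge_monotone (T1 T2 A B : R) :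
  0 <= T1 -> 0 <= T2 -> A <= T2 -> B <= T1 -> 0 <= T1 * T1 - T1 * A - (T2 * B - T2 * T2).
Proof.
move=> t1 t2 a b.
have -> : T1 * T1 - T1 * A - (T2 * B - T2 * T2)
        = T1 * (T2 - A) + T2 * (T1 - B) + (T1 - T2) ^+ 2 by ring.
by rewrite !addr_ge0 ?sqr_ge0 // mulr_ge0 // subr_ge0.
Qed.

Lemma Lap_monotone (h1 h2 u1 u2 : V -> R) :
  Lap E w h1 u1 -> Lap E w h2 u2 ->
  0 <= dot (fun z => u1 z - u2 z) (fun z => h1 z - h2 z).
Proof.
move=> [b1 [hb1 ->]] [b2 [hb2 ->]].
set U1 := (fun z => \sum_(e in E) w e * b1 e z * dot (b1 e) h1).
set U2 := (fun z => \sum_(e in E) w e * b2 e z * dot (b2 e) h2).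
have -> : dot (fun z => U1 z - U2 z) (fun z => h1 z - h2 z)
        = (dot U1 h1 - dot U1 h2) - (dot U2 h1 - dot U2 h2).
  by rewrite /dot -!sumrB; apply: eq_bigr => z _; ring.
rewrite !dot_Lap_form -!sumrB; apply: sumr_ge0 => e eE.
have [[ib1 max1] [ib2 max2]] := (hb1 e eE, hb2 e eE).
have := edge_monotone (argmaxB_ge0 (hE eE) (hb1 e eE))
  (argmaxB_ge0 (hE eE) (hb2 e eE)) (max2 _ ib1) (max1 _ ib2).
have := ltW (hw eE); set W := w e => hW hT.
have := mulr_ge0 hW hT; congr (_ <= _); ring.
Qed.

Lemma inner_dot (a b : V -> R) : inner a b = dot a (fun z => b z / d z).
Proof. by apply: eq_bigr => z _; rewrite mulrA. Qed.

Lemma NLap_monotone (g1 g2 u1 u2 : V -> R) :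
  NLap E w g1 u1 -> NLap E w g2 u2 ->
  0 <= inner (fun z => u1 z - u2 z) (fun z => g1 z - g2 z).
Proof.
move=> h1 h2; rewrite inner_dot.
have -> : (fun z => (g1 z - g2 z) / d z) = (fun z => g1 z / d z - g2 z / d z).
  by apply: funext => z; rewrite mulrBl.
exact: Lap_monotone h1 h2.
Qed.

End Monotonicity.

Section InnerProduct.
Context {R : realType} {V : finType}.
Variables (E : {set {set V}}) (w : {set V} -> R).
Hypothesis hd : forall x : V, 0 < deg E w x.
Local Notation d := (deg E w).
Local Notation inner := (inner E w).
Local Notation M := (Mconst E w).

Lemma inner_ge0 (a : V -> R) : 0 <= inner a a.
Proof.
apply: sumr_ge0 => z _; rewrite -expr2 divr_ge0 ?sqr_ge0 //; exact: ltW.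
Qed.

(* Cauchy-Schwarz, via Lagrange's identity
   2 (<a,a><b,b> - <a,b>^2) = sum_{z,z'} (a z b z' - a z' b z)^2 / (d z d z'). *)
Lemma cauchy_schwarz (a b : V -> R) : inner a b ^+ 2 <= inner a a * inner b b.
Proof.
pose X z z' := a z ^+ 2 / d z * (b z' ^+ 2 / d z').
pose Z z z' := a z * b z / d z * (a z' * b z' / d z').
have eX : inner a a * inner b b = \sum_z \sum_z' X z z'.
  rewrite /Defs.inner mulr_suml; apply: eq_bigr => z _; rewrite mulr_sumr.
  by apply: eq_bigr => z' _; rewrite /X !expr2.
have eZ : inner a b ^+ 2 = \sum_z \sum_z' Z z z'.
  rewrite expr2 /Defs.inner mulr_suml; apply: eq_bigr => z _.
  by rewrite mulr_sumr.
have lagrange : \sum_z \sum_z' (a z * b z' - a z' * b z) ^+ 2 / (d z * d z')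
   = \sum_z \sum_z' X z z' + \sum_z \sum_z' X z z' - 2 * \sum_z \sum_z' Z z z'.
  rewrite [X in _ = _ + X - _]exchange_big /= mulr_sumr -!big_split -sumrB /=.
  apply: eq_bigr => z _; rewrite mulr_sumr -!big_split -sumrB /=.
  by apply: eq_bigr => z' _; rewrite /X /Z invfM; ring.
have : 0 <= \sum_z \sum_z' (a z * b z' - a z' * b z) ^+ 2 / (d z * d z').
  apply: sumr_ge0 => z _; apply: sumr_ge0 => z' _.
  by rewrite divr_ge0 ?sqr_ge0 // mulr_ge0 // ltW.
rewrite eX eZ lagrange => H; clearbody X Z; lra.
Qed.

Lemma cauchy_schwarz_sqrt (a b : V -> R) :
  `|inner a b| <= Num.sqrt (inner a a) * Num.sqrt (inner b b).
Proof.
rewrite -sqrtrM ?inner_ge0 // -sqrtr_sqr ler_sqrt ?cauchy_schwarz //.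
by rewrite mulr_ge0 ?inner_ge0.
Qed.

Lemma inner_deltaB (g : V -> R) (x y : V) :
  inner g (fun z => delta x z - delta y z) = g x / d x - g y / d y.
Proof.
rewrite /Defs.inner -(sum_deltaB x y (fun z => g z / d z)).
by apply: eq_bigr => z _; ring.
Qed.

Lemma Mconst_ge0 : 0 <= M.
Proof. exact: bigmax_ge_id. Qed.

Lemma inv_deg_le (z : V) : (d z)^-1 <= M ^+ 2.
Proof.
rewrite -{1}(sqr_sqrtr (ltW (hd z))) -exprVn.
have hM : (Num.sqrt (d z))^-1 <= M.
  by rewrite /Mconst; apply: le_bigmax.
by rewrite !expr2; apply: ler_pM; rewrite ?invr_ge0 ?sqrtr_ge0.
Qed.

Lemma norm_deltaB_le (x y : V) :
  Num.sqrt (inner (fun z => delta x z - delta y z) (fun z => delta x z - delta y z))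
  <= 2 * M.
Proof.
have hM : 0 <= 2 * M by rewrite mulr_ge0 ?Mconst_ge0.
rewrite -(ger0_norm hM) -sqrtr_sqr ler_sqrt ?sqr_ge0 // inner_deltaB exprMn.
have [->|nxy] := eqVneq x y; first by rewrite !subrr mulr_ge0 ?sqr_ge0.
rewrite /delta !eqxx (negbTE nxy) eq_sym (negbTE nxy) /=.
have := inv_deg_le x; have := inv_deg_le y.
rewrite subr0 sub0r mul1r mulN1r opprK (_ : 2 ^+ 2 = 4 :> R).
  by have := sqr_ge0 M; lra.
by rewrite -natrX.
Qed.

End InnerProduct.

(* A continuous function on a box [0, C]^I (I finite) attains its minimum,
   by Tychonoff's theorem and the extreme value theorem. *)
Section BoxMinimum.
Context {R : realType} {I : finType}.
Local Open Scope classical_set_scope.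

Definition in_box (C : R) (a : I -> R) : Prop := forall i, 0 <= a i <= C.

Lemma box_minimum (C : R) (G : (I -> R) -> R) : 0 <= C -> continuous G ->
  exists2 p, in_box C p & forall a, in_box C a -> G p <= G a.
Proof.
move=> C0 cG.
have cK := @tychonoff I (fun _ => R) (fun _ => `[0, C]) (fun _ => @segment_compact R 0 C).
have ne : [set a : I -> R | forall i, `[0, C] (a i)] !=set0.
  by exists (fun _ => 0) => i /=; rewrite in_itv /= lexx C0.
have [p pK pmin] := compact_EVT_min ne cK (continuous_subspaceT cG).
exists p => [i|a ha]; first by move: pK; rewrite inE /= => /(_ i); rewrite in_itv.
by apply: pmin; rewrite inE /= => i; rewrite in_itv; apply: ha.
Qed.

Lemma continuousD_fun (F H : (I -> R) -> R) :
  continuous F -> continuous H -> continuous (fun a => F a + H a).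
Proof. by move=> cF cH a; exact: continuousD (cF a) (cH a). Qed.

Lemma continuousM_fun (F H : (I -> R) -> R) :
  continuous F -> continuous H -> continuous (fun a => F a * H a).
Proof. by move=> cF cH a; exact: continuousM (cF a) (cH a). Qed.

Lemma continuousN_fun (F : (I -> R) -> R) :
  continuous F -> continuous (fun a => - F a).
Proof. by move=> cF a; exact: continuousN (cF a). Qed.

Lemma continuousX_fun (F : (I -> R) -> R) (n : nat) :
  continuous F -> continuous (fun a => F a ^+ n).
Proof.
move=> cF; elim: n => [|n IH].
  have -> : (fun a => F a ^+ 0) = (fun _ => 1) by apply: funext => a; rewrite expr0.
  exact: cst_continuous.
have -> : (fun a => F a ^+ n.+1) = (fun a => F a * F a ^+ n).
  by apply: funext => a; rewrite exprS.
exact: continuousM_fun.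
Qed.

Lemma continuous_coord (i : I) : continuous (fun a : I -> R => a i).
Proof. exact: (@proj_continuous I (fun _ => R) i). Qed.

Lemma continuous_sum (J : Type) (r : seq J) (P : pred J) (F : J -> (I -> R) -> R) :
  (forall j, continuous (F j)) -> continuous (fun a => \sum_(j <- r | P j) F j a).
Proof.
move=> cF; elim: r => [|j r IH].
  have -> : (fun a => \sum_(j <- [::] | P j) F j a) = (fun _ => 0).
    by apply: funext => a; rewrite big_nil.
  exact: cst_continuous.
have -> : (fun a => \sum_(k <- j :: r | P k) F k a)
    = (fun a => if P j then F j a + \sum_(k <- r | P k) F k a
                else \sum_(k <- r | P k) F k a).
  by apply: funext => a; rewrite big_cons.
by case: (P j) => //; exact: continuousD_fun.
Qed.

End BoxMinimum.

Ltac continuity_tac :=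
  repeat first [ exact: cst_continuous | exact: continuous_coord
               | apply: continuousD_fun | apply: continuousN_fun
               | apply: continuousM_fun | apply: continuousX_fun
               | apply: continuous_sum => ? ].

Lemma first_order_sign {R : realType} (A B t0 : R) : 0 < t0 -> 0 <= B ->
  (forall t, 0 < t -> t <= t0 -> 0 <= t * A + t ^+ 2 * B) -> 0 <= A.
Proof.
move=> t0p Bp H; rewrite leNgt; apply/negP => An.
pose t := Num.min t0 (- A / (B + 1)).
have B1 : 0 < B + 1 by lra.
have tp : 0 < t by rewrite lt_min t0p /= divr_gt0 // oppr_gt0.
have tA : t * (B + 1) <= - A by rewrite -ler_pdivlMr // ge_min lexx orbT.
have tt0 : t <= t0 by rewrite ge_min lexx.
have := H t tp tt0; rewrite expr2; nra.
Qed.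

(* The variables of the dual problem are
   nonnegative coefficients a(e,x,y), meaningful for x, y in e; they define the
   edge masses s_e = sum_{x,y} a(e,x,y), the "flow"
   F = sum_e w_e sum_{x,y} a(e,x,y) (delta_x - delta_y), the candidate
   g = f - lam F and the dual energy
   G(a) = 1/2 <g, g> + lam/2 sum_e w_e s_e^2. *)
Section DualProblem.
Context {R : realType} {V : finType}.
Variables (E : {set {set V}}) (w : {set V} -> R).
Hypothesis hE : forall e, e \in E -> (0 < #|e|)%N.
Hypothesis hw : forall e, e \in E -> 0 < w e.
Hypothesis hd : forall x : V, 0 < deg E w x.
Local Notation d := (deg E w).
Variables (lam : R) (f : V -> R).
Hypothesis hlam : 0 < lam.
Local Notation Idx := ({set V} * V * V)%type.

Definition coef (a : Idx -> R) (e : {set V}) (x y : V) : R :=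
  ((x \in e) && (y \in e))%:R * a (e, x, y).

Definition mass (a : Idx -> R) (e : {set V}) : R := \sum_x \sum_y coef a e x y.

Definition flow (a : Idx -> R) (z : V) : R :=
  \sum_(e in E) w e * \sum_x \sum_y coef a e x y * (delta x z - delta y z).

Definition primal (a : Idx -> R) (z : V) : R := f z - lam * flow a z.

Definition potential (a : Idx -> R) (z : V) : R := primal a z / d z.

Definition energy (a : Idx -> R) : R :=
  2^-1 * \sum_z primal a z ^+ 2 / d z + lam * 2^-1 * \sum_(e in E) w e * mass a e ^+ 2.

Definition bump (a : Idx -> R) (i0 : Idx) (t : R) : Idx -> R :=
  fun i => a i + (i == i0)%:R * t.

Definition curvature (e0 : {set V}) (x0 y0 : V) : R :=
  ((lam * w e0) ^+ 2 * \sum_z (delta x0 z - delta y0 z) ^+ 2 / d z + lam * w e0) / 2.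

Lemma curvature_ge0 e0 x0 y0 : e0 \in E -> 0 <= curvature e0 x0 y0.
Proof.
move=> e0E; have lw : 0 < lam * w e0 by rewrite mulr_gt0 ?hw.
have : 0 <= \sum_z (delta x0 z - delta y0 z) ^+ 2 / d z.
  by apply: sumr_ge0 => z _; rewrite divr_ge0 ?sqr_ge0 ?ltW.
move=> hs; apply: divr_ge0 => //; apply: addr_ge0; last exact: ltW.
by rewrite mulr_ge0 ?sqr_ge0.
Qed.

Lemma energy_ge0 (a : Idx -> R) : 0 <= energy a.
Proof.
have hl2 : 0 <= lam * 2^-1 by rewrite mulr_ge0 ?invr_ge0 ?ltW.
apply: addr_ge0; apply: mulr_ge0 => //; first by rewrite invr_ge0.
  by apply: sumr_ge0 => z _; rewrite divr_ge0 ?sqr_ge0 ?ltW.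
by apply: sumr_ge0 => e eE; rewrite mulr_ge0 ?sqr_ge0 ?ltW ?hw.
Qed.

Section Perturbation.
Variables (a : Idx -> R) (e0 : {set V}) (x0 y0 : V).
Hypotheses (e0E : e0 \in E) (x0e : x0 \in e0) (y0e : y0 \in e0).

Lemma sum_coef_bump (e : {set V}) (F : V -> V -> R) :
  \sum_x \sum_y ((x \in e) && (y \in e))%:R * (((e, x, y) == (e0, x0, y0))%:R * F x y)
  = (e == e0)%:R * F x0 y0.
Proof.
have [->|ne] := eqVneq e e0; last first.
  by rewrite mul0r; apply: big1 => x _; apply: big1 => y _; rewrite !xpair_eqE (negbTE ne) mul0r mulr0.
rewrite mul1r (bigD1 x0) //= (bigD1 y0) //= !eqxx x0e y0e !mul1r.
rewrite big1 ?addr0; last by move=> y /negbTE ny; rewrite !xpair_eqE ny andbF mul0r mulr0.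
rewrite big1 ?addr0 // => x /negbTE nx; apply: big1 => y _.
by rewrite !xpair_eqE nx andbF mul0r mulr0.
Qed.

Lemma sum_edge_select (Y : {set V} -> R) :
  \sum_(e in E) w e * ((e == e0)%:R * Y e) = w e0 * Y e0.
Proof.
rewrite (bigD1 e0) //= eqxx mul1r big1 ?addr0 // => e /andP [_ /negbTE ->].
by rewrite mul0r mulr0.
Qed.

Lemma mass_bump t e : mass (bump a (e0, x0, y0) t) e = mass a e + (e == e0)%:R * t.
Proof.
rewrite /mass -(sum_coef_bump e (fun _ _ => t)) -big_split.
apply: eq_bigr => x _; rewrite -big_split; apply: eq_bigr => y _.
by rewrite /coef /bump /=; ring.
Qed.

Lemma flow_bump t z :
  flow (bump a (e0, x0, y0) t) z = flow a z + w e0 * (t * (delta x0 z - delta y0 z)).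
Proof.
rewrite /flow -(sum_edge_select (fun _ => t * (delta x0 z - delta y0 z))) -big_split.
apply: eq_bigr => e _ /=; rewrite -mulrDr; congr (_ * _).
rewrite -(sum_coef_bump e (fun x y => t * (delta x z - delta y z))) -big_split.
apply: eq_bigr => x _; rewrite -big_split; apply: eq_bigr => y _.
by rewrite /coef /bump /=; ring.
Qed.

Lemma energy_bump t :
  energy (bump a (e0, x0, y0) t) = energy a
    + t * (lam * w e0 * (mass a e0 - (potential a x0 - potential a y0)))
    + t ^+ 2 * curvature e0 x0 y0.
Proof.
have eprimal z : primal (bump a (e0, x0, y0) t) z
    = primal a z - lam * w e0 * t * (delta x0 z - delta y0 z).
  by rewrite /primal flow_bump; ring.
have emass e : w e * mass (bump a (e0, x0, y0) t) e ^+ 2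
    = w e * mass a e ^+ 2 + w e * ((e == e0)%:R * (2 * t * mass a e + t ^+ 2)).
  by rewrite mass_bump; case: (e == e0); rewrite ?mul1r ?mul0r; ring.
rewrite /energy (eq_bigr _ (fun e _ => emass e)) big_split /= sum_edge_select.
under eq_bigr do rewrite eprimal.
have -> : \sum_z (primal a z - lam * w e0 * t * (delta x0 z - delta y0 z)) ^+ 2 / d z
  = \sum_z primal a z ^+ 2 / d z
    - 2 * (lam * w e0 * t) * \sum_z (delta x0 z - delta y0 z) * potential a z
    + (lam * w e0 * t) ^+ 2 * \sum_z (delta x0 z - delta y0 z) ^+ 2 / d z.
  rewrite !mulr_sumr -sumrB -big_split; apply: eq_bigr => z _ /=.
  by rewrite /potential; ring.
by rewrite sum_deltaB /curvature; field.
Qed.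

End Perturbation.


Lemma coef_ge0 (a : Idx -> R) e x y : (forall i, 0 <= a i) -> 0 <= coef a e x y.
Proof. by move=> ha; rewrite mulr_ge0 ?ler0n. Qed.

Lemma mass_ge0 (a : Idx -> R) e : (forall i, 0 <= a i) -> 0 <= mass a e.
Proof. by move=> ha; apply: sumr_ge0 => x _; apply: sumr_ge0 => y _; exact: coef_ge0. Qed.

Lemma coef_le_mass (a : Idx -> R) e x y : (forall i, 0 <= a i) -> coef a e x y <= mass a e.
Proof.
move=> ha; rewrite /mass (bigD1 x) //= (bigD1 y) //= -addrA lerDl.
by apply: addr_ge0; apply: sumr_ge0 => ? _; [|apply: sumr_ge0 => ? _];
  exact: coef_ge0.
Qed.

Lemma energy_mass_lb (a : Idx -> R) e0 : e0 \in E ->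
  lam * 2^-1 * (w e0 * mass a e0 ^+ 2) <= energy a.
Proof.
move=> e0E; have hl2 : 0 < lam * 2^-1 by rewrite mulr_gt0 ?invr_gt0.
have hs : w e0 * mass a e0 ^+ 2 <= \sum_(e in E) w e * mass a e ^+ 2.
  rewrite (bigD1 e0) //= lerDl; apply: sumr_ge0 => e /andP [eE _].
  by rewrite mulr_ge0 ?sqr_ge0 ?ltW ?hw.
rewrite /energy -[X in X <= _]add0r lerD ?(ler_pM2l hl2) //.
rewrite mulr_ge0 ?invr_ge0 //; apply: sumr_ge0 => z _.
by rewrite divr_ge0 ?sqr_ge0 ?ltW.
Qed.

(* A box size C so large that no coordinate of a minimizer reaches C. *)
Definition box_bound : R := 1 + \sum_(e in E) 2 * energy (fun _ => 0) / (lam * w e).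

Lemma box_bound_ge1 : 1 <= box_bound.
Proof.
rewrite lerDl; apply: sumr_ge0 => e eE.
by rewrite divr_ge0 ?mulr_ge0 ?energy_ge0 ?ltW ?hw.
Qed.

Lemma energy0_lt e0 : e0 \in E ->
  energy (fun _ => 0) < lam * 2^-1 * (w e0 * box_bound ^+ 2).
Proof.
move=> e0E; have lw : 0 < lam * w e0 by rewrite mulr_gt0 ?hw.
have G0 := energy_ge0 (fun _ => 0); have C1 := box_bound_ge1.
set T := 2 * energy (fun _ => 0) / (lam * w e0).
have TE : lam * w e0 * T = 2 * energy (fun _ => 0) by rewrite /T mulrC divfK ?gt_eqF.
have TC : T < box_bound.
  rewrite /box_bound (bigD1 e0) //= -/T.
  have : 0 <= \sum_(e in E | e != e0) 2 * energy (fun _ => 0) / (lam * w e).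
    apply: sumr_ge0 => e /andP [eE _].
    by apply: divr_ge0; [rewrite mulr_ge0 | rewrite ltW // mulr_gt0 ?hw].
  clearbody T; lra.
clearbody T.
have : lam * w e0 * T < lam * w e0 * box_bound ^+ 2.
  by rewrite ltr_pM2l // (lt_le_trans TC) // expr2 ler_peMl; lra.
rewrite TE => hT.
have -> : lam * 2^-1 * (w e0 * box_bound ^+ 2) = lam * w e0 * box_bound ^+ 2 / 2 by field.
lra.
Qed.

Section Minimizer.
Variable p : Idx -> R.
Hypothesis p_box : in_box box_bound p.
Hypothesis p_min : forall a, in_box box_bound a -> energy p <= energy a.

Lemma p_ge0 i : 0 <= p i.
Proof. by case/andP: (p_box i). Qed.

Lemma bump_in_box i0 t : 0 <= p i0 + t <= box_bound -> in_box box_bound (bump p i0 t).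
Proof.
move=> hi i; rewrite /bump; have [->|_] := eqVneq i i0; first by rewrite mul1r.
by rewrite mul0r addr0.
Qed.

(* Since G(p) <= G(0), no coordinate of p on a genuine pair reaches the box bound,
   so p can be moved in both directions there. *)
Lemma p_lt_bound e0 x0 y0 : e0 \in E -> x0 \in e0 -> y0 \in e0 ->
  p (e0, x0, y0) < box_bound.
Proof.
move=> e0E x0e y0e; rewrite ltNge; apply/negP => Cle.
have hC : box_bound <= mass p e0.
  by apply: le_trans Cle _; have := coef_le_mass e0 x0 y0 p_ge0; rewrite /coef x0e y0e mul1r.
have hsq : box_bound ^+ 2 <= mass p e0 ^+ 2.
  by rewrite lerXn2r ?nnegrE ?(mass_ge0 _ p_ge0) //; have := box_bound_ge1; lra.
have : lam * 2^-1 * (w e0 * box_bound ^+ 2) <= lam * 2^-1 * (w e0 * mass p e0 ^+ 2).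
  apply: ler_wpM2l; first by rewrite mulr_ge0 ?invr_ge0 // ltW.
  by apply: ler_wpM2l => //; rewrite ltW ?hw.
have := energy_mass_lb p e0E; have := energy0_lt e0E.
have : energy p <= energy (fun _ => 0).
  by apply: p_min => i; rewrite lexx /=; have := box_bound_ge1; lra.
lra.
Qed.

Lemma kkt_le e0 x0 y0 : e0 \in E -> x0 \in e0 -> y0 \in e0 ->
  potential p x0 - potential p y0 <= mass p e0.
Proof.
move=> e0E x0e y0e; have lw : 0 < lam * w e0 by rewrite mulr_gt0 ?hw.
rewrite -subr_ge0 -(pmulr_rge0 _ lw).
apply: (first_order_sign (B := curvature e0 x0 y0) (t0 := box_bound - p (e0, x0, y0))).
- by rewrite subr_gt0 p_lt_bound.
- exact: curvature_ge0.
move=> t tp tle; have := p_ge0 (e0, x0, y0) => pi.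
have := p_min (bump_in_box (i0 := (e0, x0, y0)) (t := t) _).
by rewrite (energy_bump p e0E x0e y0e) => H; lra.
Qed.

Lemma kkt_eq e0 x0 y0 : e0 \in E -> x0 \in e0 -> y0 \in e0 ->
  0 < p (e0, x0, y0) -> mass p e0 <= potential p x0 - potential p y0.
Proof.
move=> e0E x0e y0e pp; have lw : 0 < lam * w e0 by rewrite mulr_gt0 ?hw.
rewrite -subr_ge0 -(pmulr_rge0 _ lw).
apply: (first_order_sign (B := curvature e0 x0 y0) (t0 := p (e0, x0, y0))) => //; first exact: curvature_ge0.
move=> t tp tle; have /andP [_ pC] := p_box (e0, x0, y0).
have := p_min (bump_in_box (i0 := (e0, x0, y0)) (t := - t) _).
by rewrite (energy_bump p e0E x0e y0e) sqrrN => H; lra.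
Qed.

Lemma coef_support e x y : coef p e x y != 0 -> (x \in e) && (y \in e).
Proof. by rewrite /coef; case: ((x \in e) && (y \in e)); rewrite ?mul0r ?eqxx. Qed.

Definition direction (e : {set V}) : V -> R :=
  if 0 < mass p e
  then fun z => \sum_x \sum_y coef p e x y / mass p e * (delta x z - delta y z)
  else fun _ => 0.

(* On the support of p every pair realizes the mass, so direction e pairs to it. *)
Lemma direction_dot e : e \in E -> 0 < mass p e ->
  dot (direction e) (potential p) = mass p e.
Proof.
move=> eE sp; rewrite /direction sp dot_convex /mass.
apply: eq_bigr => x _; apply: eq_bigr => y _.
have [->|qn] := eqVneq (coef p e x y) 0; first by rewrite !mul0r.
have /andP [xe ye] := coef_support qn.
have pxy : 0 < p (e, x, y).
  by move: qn; rewrite /coef xe ye mul1r => qn; rewrite lt_def qn p_ge0.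
have -> : potential p x - potential p y = mass p e.
  by apply/eqP; rewrite eq_le kkt_le //= kkt_eq.
by rewrite divfK ?gt_eqF.
Qed.

(* direction e is a maximizer over B_e of the pairing with the potential;
   on a massless edge, 0 = delta_a - delta_a is one, by kkt_le. *)
Lemma direction_argmax e : e \in E -> argmaxB e (potential p) (direction e).
Proof.
move=> eE.
have [sp|sn] := boolP (0 < mass p e).
  split => [|b' hb']; last first.
    by rewrite direction_dot //; apply: (inB_dot_le hb') => x y xe ye; apply: kkt_le.
  exists (fun x y => coef p e x y / mass p e); split.
  - by move=> x y; rewrite divr_ge0 ?coef_ge0 // ?ltW //; exact: p_ge0.
  - rewrite -[in RHS](@divff _ (mass p e)) ?gt_eqF // {2}/mass mulr_suml.
    by apply: eq_bigr => x _; rewrite mulr_suml.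
  - by move=> x y; rewrite mulf_eq0 negb_or => /andP [/coef_support].
  - by rewrite /direction sp.
have s0 : mass p e = 0 by apply/eqP; rewrite eq_le (mass_ge0 e p_ge0) andbT leNgt.
have [a ae] : exists a, a \in e by apply/card_gt0P; apply: hE.
rewrite /direction (negbTE sn); split => [|b' hb'].
  have -> : (fun _ : V => 0 : R) = (fun z => delta a z - delta a z).
    by apply: funext => z; rewrite subrr.
  exact: inB_pair.
have -> : dot (fun _ => 0) (potential p) = 0 by rewrite /dot big1 // => z _; rewrite mul0r.
by apply: (inB_dot_le hb') => x y xe ye; rewrite -s0; apply: kkt_le.
Qed.

Lemma primal_is_resolvent : is_resolvent E w lam f (primal p).
Proof.
exists (flow p); split; last by apply: funext => z; rewrite /primal subrK.
exists direction; split; first exact: direction_argmax.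
apply: funext => z; apply: eq_bigr => e eE; rewrite -mulrA; congr (w e * _).
have [sp|sn] := boolP (0 < mass p e).
  rewrite direction_dot // /direction sp mulr_suml; apply: eq_bigr => x _.
  by rewrite mulr_suml; apply: eq_bigr => y _; field; rewrite gt_eqF.
have s0 : mass p e = 0.
  by apply/eqP; rewrite eq_le (mass_ge0 e p_ge0) andbT leNgt.
rewrite /direction (negbTE sn) mul0r big1 // => x _; apply: big1 => y _.
suff -> : coef p e x y = 0 by rewrite mul0r.
by apply/le_anti; rewrite (coef_ge0 _ _ _ p_ge0) andbT -s0 (coef_le_mass _ _ _ p_ge0).
Qed.

End Minimizer.

Lemma energy_continuous : continuous energy.
Proof. rewrite /energy /primal /flow /mass /coef; continuity_tac. Qed.

Lemma resolvent_exists : exists g, is_resolvent E w lam f g.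
Proof.
have [p p_box p_min] := box_minimum (le_trans ler01 box_bound_ge1) energy_continuous.
by exists (primal p); exact: primal_is_resolvent.
Qed.

End DualProblem.

Lemma resolvent_spec {R : realType} {V : finType} (E : {set {set V}}) (w : {set V} -> R)
    (lam : R) (f : V -> R) :
  (forall e, e \in E -> (0 < #|e|)%N) -> (forall e, e \in E -> 0 < w e) ->
  (forall x : V, 0 < deg E w x) -> 0 < lam ->
  is_resolvent E w lam f (resolvent E w lam f).
Proof. by move=> hE hw hd hlam; apply: epsilon_spec; exact: resolvent_exists. Qed.

Lemma le_of_sqr_le_mul {R : realType} (s c : R) : 0 <= s -> 0 <= c -> s * s <= c * s -> s <= c.
Proof. by move=> s0 c0 h; nra. Qed.

Section ResolventBounds.
Context {R : realType} {V : finType}.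
Variables (E : {set {set V}}) (w : {set V} -> R).
Hypothesis hE : forall e, e \in E -> (0 < #|e|)%N.
Hypothesis hw : forall e, e \in E -> 0 < w e.
Hypothesis hd : forall x : V, 0 < deg E w x.
Local Notation d := (deg E w).
Local Notation inner := (inner E w).
Local Notation M := (Mconst E w).
Local Notation norm a := (Num.sqrt (inner a a)).

Lemma vol_ge0 : 0 <= vol E w.
Proof. by apply: sumr_ge0 => z _; exact: ltW. Qed.

Lemma dist_edge_le1 e a b : e \in E -> a \in e -> b \in e -> (dist E a b <= 1)%N.
Proof.
move=> eE ae be; have w1 : walk E a b 1.
  apply/existsP; exists [tuple b]; rewrite /= eqxx !andbT.
  by apply/existsP; exists e; rewrite eE ae be.
rewrite /dist; case: pselect => [h|]; last by case; exists 1%N.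
by case: ex_minnP => m _ /(_ 1%N w1).
Qed.

Lemma norm_deltaB_point (a c z : V) (e : {set V}) : a \in e -> c \in e ->
  `|(delta a z : R) - delta c z| <= (z \in e)%:R.
Proof.
rewrite /delta => ae ce; have [->|za] := eqVneq z a.
  by rewrite ae; case: (a == c); rewrite /= ?subrr ?normr0 ?subr0 ?normr1.
have [->|zc] := eqVneq z c; first by rewrite ce sub0r normrN normr1.
by rewrite subrr normr0 ler0n.
Qed.

Lemma argmax_pairs (h : V -> R) : exists bs : {set V} -> V -> R, forall e, e \in E ->
  argmaxB e h (bs e) /\
  exists a c, [/\ a \in e, c \in e & bs e = (fun z => delta a z - delta c z)].
Proof.
suff hb e : exists b : V -> R, e \in E -> argmaxB e h b /\
     exists a c, [/\ a \in e, c \in e & b = (fun z => delta a z - delta c z)].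
  by have [bs hbs] := choice _ hb; exists bs.
have [eE|_] := boolP (e \in E); last by exists (fun _ => 0).
have [a0 a0e] : exists a, a \in e by apply/card_gt0P; apply: hE.
have [[a c] /= /andP [ae ce] hmax] := @arg_maxP _ _ _ (a0, a0)
  [pred q : V * V | (q.1 \in e) && (q.2 \in e)] (fun q => h q.1 - h q.2) (introT andP (conj a0e a0e)).
exists (fun z => delta a z - delta c z) => _; split; last by exists a, c.
split; first exact: inB_pair.
move=> b' hb'; rewrite /dot sum_deltaB; apply: (inB_dot_le hb') => x y xe ye.
by apply: (hmax (x, y)); rewrite /= xe ye.
Qed.

(* For a weighted 1-Lipschitz f, the normalized Laplacian contains an element
   u0 with |u0(z)| <= d_z, hence <u0, u0> <= vol(V). *)
Lemma lip1_NLap_small f : lip1 E w f -> exists2 u0, NLap E w f u0 & inner u0 u0 <= vol E w.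
Proof.
move=> hf; pose h z := f z / d z.
have [bs hbs] := argmax_pairs h.
exists (fun z => \sum_(e in E) w e * bs e z * dot (bs e) h).
  by exists bs; split => // e eE; case: (hbs e eE).
apply: ler_sum => z _; set u := \sum_(e in E) _.
have hu : `|u| <= d z.
  rewrite /deg big_mkcondr /=; apply: le_trans (ler_norm_sum _ _ _) _.
  apply: ler_sum => e eE; have [_ [a [c [ae ce ->]]]] := hbs e eE.
  rewrite /dot sum_deltaB !normrM (gtr0_norm (hw eE)).
  have hac : `|h a - h c| <= 1.
    by apply: le_trans (hf a c) _; rewrite lern1; exact: dist_edge_le1 eE ae ce.
  have := norm_deltaB_point z ae ce; case: (z \in e) => /= hz.
    by rewrite -[X in _ <= X]mulr1 -mulrA ler_pM2l ?hw // -[1]mulr1 ler_pM.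
  by move: hz; rewrite normr_le0 => /eqP ->; rewrite normr0 mulr0 mul0r.
rewrite ler_pdivrMr //; apply: le_trans (ler_norm _) _.
by rewrite normrM ler_pM.
Qed.

(* The Laplacian part u of any resolvent of a 1-Lipschitz f has norm <= vol(V)^{1/2}:
   monotonicity against u0 gives <u, u> <= <u0, u>, then Cauchy-Schwarz. *)
Lemma resolvent_Lap_norm_le lam f g u : 0 < lam -> lip1 E w f -> NLap E w g u ->
  f = (fun z => g z + lam * u z) -> norm u <= Num.sqrt (vol E w).
Proof.
move=> hl hf hgu hfe; have [u0 hu0 hu0b] := lip1_NLap_small hf.
have mono := NLap_monotone hE hw hgu hu0.
have uu0 : inner u u <= inner u0 u.
  have e : inner (fun z => u z - u0 z) (fun z => g z - f z) = - lam * (inner u u - inner u0 u).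
    by rewrite hfe /Defs.inner -sumrB mulr_sumr; apply: eq_bigr => z _; ring.
  by move: mono; rewrite e mulNr oppr_ge0 pmulr_rle0 // subr_le0.
apply: le_of_sqr_le_mul; rewrite ?sqrtr_ge0 //.
rewrite -expr2 sqr_sqrtr ?(inner_ge0 hd) //; apply: (le_trans uu0).
apply: le_trans (ler_norm _) _; apply: le_trans (cauchy_schwarz_sqrt hd _ _) _.
by apply: ler_wpM2r; rewrite ?sqrtr_ge0 // ler_sqrt ?vol_ge0.
Qed.

Lemma resolvent_diff_le lam mu f gl gm ul um : 0 < mu ->
  NLap E w gl ul -> NLap E w gm um ->
  f = (fun z => gl z + lam * ul z) -> f = (fun z => gm z + mu * um z) ->
  norm (fun z => gl z - gm z) <= `|lam - mu| * norm ul.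
Proof.
move=> hm hul hum hfl hfm; have mono := NLap_monotone hE hw hul hum.
set Dg := (fun z => gl z - gm z) in mono *.
have eN : inner Dg Dg
    = - mu * inner (fun z => ul z - um z) Dg + (mu - lam) * inner ul Dg.
  rewrite /Defs.inner !mulr_sumr -big_split; apply: eq_bigr => z _ /=.
  have e : gm z + mu * um z = gl z + lam * ul z by have := congr1 (@^~ z) hfl; rewrite hfm.
  have e' : gl z = gm z + mu * um z - lam * ul z by rewrite e addrK.
  by rewrite /Dg e'; ring.
have cs : (mu - lam) * inner ul Dg <= `|lam - mu| * (norm ul * norm Dg).
  apply: le_trans (ler_norm _) _; rewrite normrM distrC.
  by rewrite ler_wpM2l ?cauchy_schwarz_sqrt.
apply: le_of_sqr_le_mul; rewrite ?mulr_ge0 ?sqrtr_ge0 //.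
rewrite -expr2 sqr_sqrtr ?(inner_ge0 hd) // {1}eN -mulrA.
have := mulr_ge0 (ltW hm) mono; clearbody Dg; lra.
Qed.

Lemma resolvent_pairing_lipschitz lam mu f x y : 0 < lam -> 0 < mu -> lip1 E w f ->
  `|inner (resolvent E w lam f) (fun z => delta x z - delta y z)
    - inner (resolvent E w mu f) (fun z => delta x z - delta y z)|
  <= 2 * M * Num.sqrt (vol E w) * `|lam - mu|.
Proof.
move=> hl hm hf; set D := fun z => delta x z - delta y z.
have [ul [hul hfl]] := resolvent_spec f hE hw hd hl.
have [um [hum hfm]] := resolvent_spec f hE hw hd hm.
have -> : inner (resolvent E w lam f) D - inner (resolvent E w mu f) D
    = inner (fun z => resolvent E w lam f z - resolvent E w mu f z) D.
  by rewrite /Defs.inner -sumrB; apply: eq_bigr => z _; ring.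
apply: le_trans (cauchy_schwarz_sqrt hd _ _) _.
have -> : 2 * M * Num.sqrt (vol E w) * `|lam - mu|
    = `|lam - mu| * Num.sqrt (vol E w) * (2 * M) by ring.
apply: ler_pM; rewrite ?sqrtr_ge0 ?norm_deltaB_le //.
apply: le_trans (resolvent_diff_le hm hul hum hfl hfm) _.
by apply: ler_wpM2l => //; exact: resolvent_Lap_norm_le hl hf hul hfl.
Qed.

Lemma resolvent_pairing_ub lam f x y : 0 < lam -> lip1 E w f ->
  inner (resolvent E w lam f) (fun z => delta x z - delta y z)
  <= (dist E x y)%:R + lam * (Num.sqrt (vol E w) * (2 * M)).
Proof.
move=> hl hf; set D := fun z => delta x z - delta y z.
have [u [hu hfu]] := resolvent_spec f hE hw hd hl.
have -> : inner (resolvent E w lam f) D = inner f D - lam * inner u D.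
  have fz z : f z = resolvent E w lam f z + lam * u z by rewrite {1}hfu.
  by rewrite /Defs.inner mulr_sumr -sumrB; apply: eq_bigr => z _; rewrite fz; ring.
have h1 : inner f D <= (dist E x y)%:R.
  by rewrite /D inner_deltaB; apply: le_trans (ler_norm _) (hf x y).
have h2 : `|inner u D| <= Num.sqrt (vol E w) * (2 * M).
  apply: le_trans (cauchy_schwarz_sqrt hd _ _) _.
  by apply: ler_pM; rewrite ?sqrtr_ge0 ?(resolvent_Lap_norm_le hl hf hu hfu) ?norm_deltaB_le.
have h3 : - inner u D <= Num.sqrt (vol E w) * (2 * M).
  by apply: le_trans h2; rewrite -normrN ler_norm.
have := ler_wpM2l (ltW hl) h3; rewrite mulrN; lra.
Qed.

End ResolventBounds.

Lemma sup_image_close {R : realType} (A : Type) (P : A -> Prop) (g1 g2 : A -> R)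
    (K B1 B2 : R) (a0 : A) :
  P a0 -> (forall a, P a -> g1 a <= B1) -> (forall a, P a -> g2 a <= B2) ->
  (forall a, P a -> `|g1 a - g2 a| <= K) ->
  `|sup [set r | exists a, P a /\ r = g1 a] - sup [set r | exists a, P a /\ r = g2 a]| <= K.
Proof.
move=> Pa0 hb1 hb2 hK.
have sup_le (h1 h2 : A -> R) B : (forall a, P a -> h2 a <= B) ->
    (forall a, P a -> h1 a <= h2 a + K) ->
    sup [set r | exists a, P a /\ r = h1 a] <= sup [set r | exists a, P a /\ r = h2 a] + K.
  move=> hb h12; have hs : has_sup [set r | exists a, P a /\ r = h2 a].
    by split; [exists (h2 a0), a0 | exists B => r [a [Pa ->]]; exact: hb].
  apply: ge_sup; first by exists (h1 a0), a0.
  move=> r [a [Pa ->]]; apply: le_trans (h12 a Pa) _.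
  by rewrite lerD2r; apply: sup_upper_bound => //; exists a.
have l12 : sup [set r | exists a, P a /\ r = g1 a]
    <= sup [set r | exists a, P a /\ r = g2 a] + K.
  apply: (sup_le _ _ B2 hb2) => a Pa.
  by move: (hK a Pa); rewrite ler_norml => /andP [_ h]; lra.
have l21 : sup [set r | exists a, P a /\ r = g2 a]
    <= sup [set r | exists a, P a /\ r = g1 a] + K.
  apply: (sup_le _ _ B1 hb1) => a Pa.
  by move: (hK a Pa); rewrite ler_norml => /andP [h _]; lra.
by rewrite ler_norml; apply/andP; split; lra.
Qed.

Theorem mainTheorem7 (R : realType) (V : finType)
  (E : {set {set V}}) (w : {set V} -> R)
  (hE : forall e, e \in E -> (0 < #|e|)%N)
  (hw : forall e, e \in E -> 0 < w e)
  (hd : forall x : V, 0 < deg E w x)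
  (hconn : forall x y : V, exists n, walk E x y n)
  (lam mu : R) (hlam : 0 < lam) (hmu : 0 < mu) (x y : V) :
  `|KD E w lam x y - KD E w mu x y|
    <= 2 * Mconst E w * Num.sqrt (vol E w) * `|lam - mu|.
Proof.
apply: (sup_image_close (a0 := fun _ => 0)).
- by move=> a b; rewrite !mul0r subrr normr0 ler0n.
- by move=> f hf; apply: (resolvent_pairing_ub hE hw hd _ _ hlam hf).
- by move=> f hf; apply: (resolvent_pairing_ub hE hw hd _ _ hmu hf).
- by move=> f hf; apply: resolvent_pairing_lipschitz.
Qed.
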